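(* Let $F_1(x)=x^{t_1}$, $F_2(x)=x^{t_2}$ be monomial power permutations of $GF(2^m)$ with $t_1,t_2\in C^*_i$ for some $i$, and let $S=STS(\mathcal H^n)$. Then the self-embeddings $S\cup F_1(S)$ and $S\cup F_2(S)$ are isomorphic, and $V^*_{F_1}(a)=V^*_{F_2}(a)$ and $v_{F_1}(a)=v_{F_2}(a)$ for all nonzero $a$ (and these values do not depend on $a$).
   Context: $n=2^m-1$; a monomial power permutation is $F(x)=x^t$ with $\gcd(t,n)=1$. $S=STS(\mathcal H^n)$ is the set of 3-subsets $\{a,b,c\}$ of nonzero elements of $GF(2^m)$ with $a+b+c=0$; $F(S)=\{\{F(a),F(b),F(c)\}:\{a,b,c\}\in S\}$. The cyclotomic coset of $i$ is $C_i=\{i,2i,4i,\dots\}$ modulo $2^m-1$; $C^*_i$ is the union of $C_i$ and the cyclotomic coset of the multiplicative inverse of $i$ modulo $2^m-1$. Self-embeddings $S\cup F_1(S)$, $S\cup F_2(S)$ are isomorphic if there is a permutation $\sigma$ of the nonzero elements with either $\sigma(S)=S,\sigma(F_1(S))=F_2(S)$ or $\sigma(S)=F_2(S),\sigma(F_1(S))=S$. For nonzero $a$: $v_F(a)=|\{x+F^{-1}(a+F(x)) : x\in GF(2^m)\}|$; with $\{a,a_i,a+a_i\}$ ($i=1,\dots,2^{m-1}-1$) the triples of $S$ through $a$ and $z_i=F(F^{-1}(a_i)+F^{-1}(a+a_i))$, $V^*_F(a)$ is the multiset of multiplicities of the distinct elements in the multiset $\{z_i\}$. *)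

From HB Require Import structures.
From mathcomp Require Import all_boot all_order all_algebra all_fingroup all_field.
Set Implicit Arguments. Unset Strict Implicit. Unset Printing Implicit Defensive.
Import GRing.Theory.
Local Open Scope ring_scope.

Section Defs.
Variable F : finFieldType.

Definition powf (t : nat) : F -> F := fun x => x ^+ t.
Definition pinv (t : nat) : F -> F := finv (powf t).

(* monomial power permutation: gcd(t, 2^m-1) = 1 (t > 0 so that 0^t = 0) *)
Definition monomial_perm (m t : nat) : Prop :=
  (0 < t)%N /\ coprime t (2 ^ m - 1).

Definition STS : {set {set F}} :=
  [set B : {set F} | [&& #|B| == 3%N, 0 \notin B & \sum_(x in B) x == 0]].

Definition img_sys (f : F -> F) (S : {set {set F}}) : {set {set F}} :=
  [set f @: B | B : {set F} in S].

Definition selfemb_iso (t1 t2 : nat) : Prop :=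
  exists sigma : {perm F},
    sigma 0 = 0 /\
    ((img_sys sigma STS = STS /\
      img_sys sigma (img_sys (powf t1) STS) = img_sys (powf t2) STS) \/
     (img_sys sigma STS = img_sys (powf t2) STS /\
      img_sys sigma (img_sys (powf t1) STS) = STS)).

Definition vF (t : nat) (a : F) : nat :=
  #|[set x + pinv t (a + powf t x) | x : F]|.

(* for a triple B = {a, b, a+b} through a: z = F(F^{-1}(b) + F^{-1}(a+b)) *)
Definition zval (t : nat) (a : F) (B : {set F}) : F :=
  let b := odflt 0 [pick x in B :\ a] in
  powf t (pinv t b + pinv t (a + b)).

Definition zs (t : nat) (a : F) : seq F :=
  [seq zval t a B | B <- enum [set B in STS | a \in B]].

Definition Vstar (t : nat) (a : F) : seq nat :=
  [seq count_mem z (zs t a) | z <- undup (zs t a)].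
End Defs.

Definition in_coset (n i t : nat) : Prop :=
  exists k : nat, t = i * 2 ^ k %[mod n].

Definition in_coset_star (n i t : nat) : Prop :=
  in_coset n i t \/
  exists j : nat, i * j = 1 %[mod n] /\ in_coset n j t.

From HB Require Import structures.
From mathcomp Require Import all_boot all_order all_algebra all_fingroup all_field.
From mathcomp Require Import zify.
Import GRing.Theory.
Local Open Scope ring_scope.
Set Implicit Arguments. Unset Strict Implicit.

(* In characteristic 2 the triples of S through a are the sets {a, b, a + b}.
   The invariants are defined for any pair P, Q of mutually inverse maps
   (z_gen, zseq, vset below; for P = x^t, Q = P^-1 they are V*_F and v_F).
   1. Transport: an additive bijection g together with an additive bijection h
      satisfying Q'(g y) = h (Q y) and P'(h x) = g (P x) carries the triples
      through a onto those through g a, the z-multiset of (P, Q) at a onto that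
      of (P', Q') at g a, and the v-set onto the v-set.  Scaling by a constant
      gives independence of a; a Frobenius map phi = x^(2^e) relates x^t and
      phi o x^t = x^(t 2^e).
   2. Inversion: for a multiplicative bijection P with inverse Q, explicit
      bijections show that (P, Q) and (Q, P) have the same invariants.
   3. Arithmetic: t1, t2 in C*_i means t2 = t1 2^e or t1 t2 = 2^e modulo
      2^m - 1, so x^t2 is phi o x^t1 or phi o (x^t1)^-1; the isomorphism of
      self-embeddings is phi in the first case and x^t2 in the second. *)

Definition profile (T : eqType) (s : seq T) : seq nat :=
  [seq count_mem z s | z <- undup s].

Lemma profile_perm (T : eqType) (s1 s2 : seq T) :
  perm_eq s1 s2 -> perm_eq (profile s1) (profile s2).
Proof.
move=> s12; rewrite /profile (eq_map (fun z => (seq.permP s12) (pred1 z))).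
exact: perm_map (perm_undup (perm_mem s12)).
Qed.

Lemma profile_map_inj (T U : eqType) (h : T -> U) (s : seq T) :
  injective h -> profile (map h s) = profile s.
Proof.
move=> hi; rewrite /profile undup_map_inj // -map_comp; apply: eq_map => z /=.
by rewrite count_map; apply: eq_count => x /=; rewrite (inj_eq hi).
Qed.

Lemma perm_map_enum_imset (T U : finType) (R : eqType) (A : {set T}) (B : {set U})
    (h : T -> U) (f : U -> R) :
  {in A &, injective h} -> h @: A = B ->
  perm_eq [seq f y | y <- enum B] [seq f (h x) | x <- enum A].
Proof.
move=> hi hAB; rewrite (map_comp f h); apply: perm_map.
apply: uniq_perm; first exact: enum_uniq.
  by rewrite map_inj_in_uniq ?enum_uniq // => x y; rewrite !mem_enum; apply: hi.
move=> y; rewrite mem_enum -hAB; apply/imsetP/mapP => -[x xA ->];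
  by exists x; rewrite ?mem_enum in xA *.
Qed.

Lemma addr_eq_l (V : zmodType) (a b : V) : (a + b == a) = (b == 0).
Proof. by rewrite -[X in _ == X]addr0 (inj_eq (addrI a)). Qed.

Lemma addr_eq_r (V : zmodType) (a b : V) : (a + b == b) = (a == 0).
Proof. by rewrite -[X in _ == X]add0r (inj_eq (addIr b)). Qed.

Lemma img_sys_ext (F : finFieldType) (f g : F -> F) (S : {set {set F}}) :
  f =1 g -> img_sys f S = img_sys g S.
Proof. by move=> fg; apply: eq_imset => B; apply: eq_imset. Qed.

Lemma img_sys_comp (F : finFieldType) (f g : F -> F) (S : {set {set F}}) :
  img_sys f (img_sys g S) = img_sys (f \o g) S.
Proof.
apply/setP => Y; apply/imsetP/imsetP => [[B /imsetP [C HC ->] ->]|[C HC ->]].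
  by exists C => //; apply/esym/imset_comp.
by exists (g @: C); [exact: imset_f | apply/imset_comp].
Qed.

Section Char2.
Variable F : finFieldType.
Hypothesis pchar2 : 2 \in [pchar F].
Let addxx := addrr_pchar2 pchar2.

Lemma addr_eq0_pchar2 (a b : F) : (a + b == 0) = (a == b).
Proof. by rewrite addr_eq0 oppr_pchar2. Qed.

Lemma STS_triple (B : {set F}) (a b : F) :
  B \in STS F -> a \in B -> b \in B -> a != b -> B = [set a; b; a + b].
Proof.
rewrite inE => /and3P [/eqP B3 _ /eqP sumB0] aB bB ab.
have bBa : b \in B :\ a by rewrite !inE eq_sym ab.
have /cards1P [c Bc] : #|B :\ a :\ b| == 1%N.
  by move: B3; rewrite (cardsD1 a B) aB (cardsD1 b (B :\ a)) bBa !add1n => -[->].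
have EB : B = a |: (b |: [set c]) by rewrite -Bc !setD1K.
have : c \in B :\ a :\ b by rewrite Bc set11.
rewrite !inE => /and3P [cb ca _].
move: sumB0; rewrite EB big_setU1 /=; last by rewrite !inE negb_or ab eq_sym ca.
rewrite big_setU1 /=; last by rewrite !inE eq_sym cb.
rewrite big_set1 addrA => /eqP; rewrite addr_eq0 oppr_pchar2 // => /eqP ->.
by apply/setP => x; rewrite !inE orbA.
Qed.

Lemma triple_STS (a b : F) :
  a != 0 -> b != 0 -> a != b -> [set a; b; a + b] \in STS F.
Proof.
move=> a0 b0 ab.
have -> : [set a; b; a + b] = a |: (b |: [set a + b]).
  by apply/setP => x; rewrite !inE orbA.
rewrite inE; apply/and3P; split.
- rewrite !cardsU1 cards1 !inE [a == a + b]eq_sym addr_eq_l.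
  by rewrite [b == a + b]eq_sym addr_eq_r (negbTE a0) (negbTE b0) (negbTE ab).
- by rewrite !inE !negb_or eq_sym a0 eq_sym b0 eq_sym addr_eq0_pchar2 ab.
- rewrite big_setU1 /=; last by rewrite !inE negb_or ab eq_sym addr_eq_l b0.
  rewrite big_setU1 /=; last by rewrite !inE eq_sym addr_eq_r a0.
  by rewrite big_set1 addrA addxx.
Qed.

Definition triples_through (a : F) : {set {set F}} := [set B in STS F | a \in B].

Lemma triple_second_point (B : {set F}) (a : F) :
  B \in triples_through a -> exists2 b, b \in B & b != a.
Proof.
rewrite inE => /andP [SB aB].
have : B :\ a != set0.
  apply: contraTneq SB => Ba0; rewrite inE negb_and; apply/orP; left.
  by rewrite (cardsD1 a B) aB Ba0 cards0.
by case/set0Pn => b; rewrite !inE => /andP [ba bB]; exists b.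
Qed.

Lemma STS_point_neq0 (B : {set F}) (x : F) : B \in STS F -> x \in B -> x != 0.
Proof.
rewrite inE => /and3P [_ B0 _] xB.
by apply: contraNneq B0 => <-.
Qed.

Section AdditiveImage.
Variable g : F -> F.
Hypothesis g_inj : injective g.
Hypothesis gD : {morph g : x y / x + y}.
Hypothesis g0 : g 0 = 0.

Lemma STS_imset (B : {set F}) : B \in STS F -> g @: B \in STS F.
Proof.
rewrite !inE => /and3P [B3 B0 sumB0]; apply/and3P; split.
- by rewrite card_imset.
- by rewrite -g0 mem_imset.
- rewrite big_imset /=; last by move=> x y _ _; apply: g_inj.
  by rewrite -(big_morph g gD g0) (eqP sumB0) g0.
Qed.

Lemma img_sys_STS : img_sys g (STS F) = STS F.
Proof.
apply/eqP; rewrite eqEcard; apply/andP; split.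
  by apply/subsetP => B' /imsetP [B SB ->]; apply: STS_imset.
by rewrite card_imset //; exact: imset_inj.
Qed.

Lemma triples_through_imset (a : F) :
  [set g @: B | B : {set F} in triples_through a] = triples_through (g a).
Proof.
apply/setP => B'; apply/imsetP/idP.
  case=> B; rewrite inE => /andP [SB aB] ->.
  by rewrite inE STS_imset //= imset_f.
rewrite inE => /andP [SB' aB'].
have : B' \in img_sys g (STS F) by rewrite img_sys_STS.
case/imsetP => B SB EB; exists B => //.
by rewrite inE SB /=; move: aB'; rewrite EB mem_imset.
Qed.
End AdditiveImage.

Definition z_gen (P Q : F -> F) (a : F) (B : {set F}) : F :=
  let b := odflt 0 [pick x in B :\ a] in P (Q b + Q (a + b)).

Definition zseq (P Q : F -> F) (a : F) : seq F :=
  [seq z_gen P Q a B | B <- enum (triples_through a)].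

Definition vset (P Q : F -> F) (a : F) : {set F} := [set x + Q (a + P x) | x : F].

(* z does not depend on which of the two other points of the block is used. *)
Lemma z_genE (P Q : F -> F) (B : {set F}) (a b : F) :
  B \in STS F -> a \in B -> b \in B -> b != a ->
  z_gen P Q a B = P (Q b + Q (a + b)).
Proof.
move=> SB aB bB ba; rewrite /z_gen.
case: pickP => [b' | none] /=; last by move: (none b); rewrite !inE ba bB.
rewrite !inE => /andP [b'a b'B].
move: b'B; rewrite (STS_triple SB aB bB); last by rewrite eq_sym.
rewrite !inE (negbTE b'a) /= => /orP [/eqP -> // | /eqP ->].
by rewrite addrA addxx add0r addrC.
Qed.

Lemma zseq_reindex (P Q P' Q' : F -> F) (a a' : F) (T : {set F} -> {set F})
    (f : F -> F) :
  {in triples_through a &, injective T} ->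
  T @: triples_through a = triples_through a' ->
  {in triples_through a, forall B, z_gen P' Q' a' (T B) = f (z_gen P Q a B)} ->
  perm_eq (zseq P' Q' a') (map f (zseq P Q a)).
Proof.
move=> Tinj Tonto Tz; apply: perm_trans (perm_map_enum_imset _ Tinj Tonto) _.
rewrite -map_comp; apply/seq.permP => p; congr (count p _).
by apply/eq_in_map => B; rewrite mem_enum => /Tz.
Qed.

Section Transport.
Variables P Q P' Q' g h : F -> F.
Hypothesis g_inj : injective g.
Hypothesis gD : {morph g : x y / x + y}.
Hypothesis g0 : g 0 = 0.
Hypothesis h_inj : injective h.
Hypothesis hD : {morph h : x y / x + y}.
Hypothesis Q'g : forall y, Q' (g y) = h (Q y).
Hypothesis P'h : forall x, P' (h x) = g (P x).

Lemma zseq_transport (a : F) : perm_eq (zseq P' Q' (g a)) (map g (zseq P Q a)).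
Proof.
apply: zseq_reindex (triples_through_imset g_inj gD g0 a) _.
  by move=> B1 B2 _ _; apply: imset_inj.
move=> B /[dup] XB; rewrite inE => /andP [SB aB].
have [b bB ba] := triple_second_point XB.
rewrite (z_genE P Q SB aB bB ba) (z_genE _ _ (STS_imset g_inj gD g0 SB)
  (imset_f g aB) (imset_f g bB)) ?(inj_eq g_inj) //.
by rewrite -gD !Q'g -hD P'h.
Qed.

Lemma vset_transport (a : F) : vset P' Q' (g a) = h @: vset P Q a.
Proof.
have Q'gP y : y + Q' (g a + P' y) = h (finv h y + Q (a + P (finv h y))).
  by rewrite hD -Q'g gD -P'h !(f_finv h_inj).
apply/setP => z; apply/imsetP/imsetP => [[y _ ->]|[x' /imsetP [x _ ->] ->]].
  rewrite Q'gP; exists (finv h y + Q (a + P (finv h y))) => //.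
  exact: imset_f.
by exists (h x); rewrite // Q'gP finv_f.
Qed.
End Transport.

Section MultiplicativeBijection.
Variables P Q : F -> F.
Hypothesis PK : cancel P Q.
Hypothesis QK : cancel Q P.
Hypothesis PM : {morph P : x y / x * y}.
Hypothesis P0 : P 0 = 0.
Hypothesis P1 : P 1 = 1.

Let P_inj : injective P := can_inj PK.
Let Q_inj : injective Q := can_inj QK.

Lemma QM : {morph Q : x y / x * y}.
Proof. by move=> x y; apply: P_inj; rewrite PM !QK. Qed.

Lemma P_eq0 (x : F) : (P x == 0) = (x == 0).
Proof. by rewrite -{1}P0 (inj_eq P_inj). Qed.

Lemma Q0 : Q 0 = 0.
Proof. by apply: P_inj; rewrite QK P0. Qed.

Lemma Q_eq0 (x : F) : (Q x == 0) = (x == 0).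
Proof. by rewrite -P_eq0 QK. Qed.

Lemma PV (x : F) : P x^-1 = (P x)^-1.
Proof.
have [->|x0] := eqVneq x 0; first by rewrite invr0 P0 invr0.
have Px0 : P x != 0 by rewrite P_eq0.
by apply: (mulfI Px0); rewrite -PM !mulfV.
Qed.

Lemma QV (x : F) : Q x^-1 = (Q x)^-1.
Proof. by apply: P_inj; rewrite PV !QK. Qed.

(* Scaling a by P l is a transport with g = (P l * _), h = (l * _). *)
Lemma invariants_indep (a b : F) : a != 0 -> b != 0 ->
  perm_eq (profile (zseq P Q a)) (profile (zseq P Q b)) /\
  #|vset P Q a| = #|vset P Q b|.
Proof.
move=> a0 b0; pose l := Q (b / a).
have l0 : l != 0 by rewrite Q_eq0 mulf_neq0 ?invr_eq0.
have Pl0 : P l != 0 by rewrite P_eq0.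
have -> : b = P l * a by rewrite QK mulfVK.
have Q'g y : Q (P l * y) = l * Q y by rewrite QM PK.
have P'h x : P (l * x) = P l * P x by rewrite PM.
have gD : {morph *%R (P l) : x y / x + y} by move=> x y; rewrite mulrDr.
have hD : {morph *%R l : x y / x + y} by move=> x y; rewrite mulrDr.
split.
  rewrite -[profile (zseq P Q a)](profile_map_inj _ (mulfI Pl0)) perm_sym.
  apply: profile_perm; exact: zseq_transport (mulfI Pl0) gD (mulr0 _) hD Q'g P'h a.
rewrite (vset_transport gD (mulfI l0) hD Q'g P'h).
by rewrite card_imset //; exact: mulfI.
Qed.

(* The v-sets of (Q, P) and (P, Q) at c are in bijection via s |-> c P (c / s). *)
Lemma card_vset_swap (c : F) : c != 0 -> #|vset Q P c| = #|vset P Q c|.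
Proof.
move=> c0; pose k s := c * P (c / s).
have k_inj : injective k.
  by move=> s1 s2 /(mulfI c0) /P_inj /(mulfI c0) /invr_inj.
suff -> : vset Q P c = k @: vset P Q c by rewrite card_imset.
apply/setP => z; apply/imsetP/imsetP.
- case=> x' _ ->; set u := Q x'.
  rewrite -[x']QK -/u; set d := P u + P (c + u).
  have d0 : d != 0 by rewrite addr_eq0_pchar2 (inj_eq P_inj) eq_sym addr_eq_r.
  set r := Q (d / c).
  have r0 : r != 0 by rewrite Q_eq0 mulf_neq0 // invr_eq0.
  exists (c / r); last by rewrite /k invf_div mulrCA mulfV // mulr1 QK mulrC divfK.
  apply/imsetP; exists (r^-1 * u) => //.
  have Pr : P r^-1 = c / d by rewrite PV QK invf_div.
  have dPu : d + P u = P (c + u) by rewrite /d addrAC addxx add0r.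
  have cPu : c + c / d * P u = c / d * P (c + u) by rewrite -dPu mulrDr mulfVK.
  by rewrite PM Pr cPu -Pr -PM PK -mulrDr addrCA addxx addr0 mulrC.
- case=> s' /imsetP [x _ ->] ->.
  set y := Q (c + P x); have Py : P y = c + P x by rewrite QK.
  set s := x + y.
  have s0 : s != 0.
    rewrite addr_eq0_pchar2; apply: contraNneq c0 => exy.
    by move: Py; rewrite -exy => /eqP; rewrite eq_sym addr_eq_r.
  exists (P (c / s * x)) => //; rewrite PK.
  have cy : c + c / s * x = c / s * y.
    by rewrite -{1}(divfK s0 c) -mulrDr /s addrAC addxx add0r.
  by rewrite cy !PM -mulrDr Py addrCA addxx addr0 /k PM mulrC.
Qed.

(* A relabelling of the blocks through a: the block {a, c, a + c} goes to
   {a, b c, a + b c} with b c = a Q c / (Q c + Q (a + c)), and the value of z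
   for (Q, P) on the image is Q a * a / Q z for the value z of (P, Q). *)
Section Swap.
Variable a : F.
Hypothesis a0 : a != 0.

Let sQ (c : F) : F := Q c + Q (a + c).
Definition swap_point (c : F) : F := a * Q c / sQ c.
Definition swap_triple (B : {set F}) : {set F} :=
  let c := odflt 0 [pick x in B :\ a] in [set a; swap_point c; a + swap_point c].

Let sQ_neq0 (c : F) : sQ c != 0.
Proof. by rewrite addr_eq0_pchar2 (inj_eq Q_inj) eq_sym addr_eq_r. Qed.

Let sQ_add (c : F) : sQ (a + c) = sQ c.
Proof. by rewrite /sQ addrA addxx add0r addrC. Qed.

(* The two other points c, a + c of a block give points b c, a + b c of the
   same image block, so swap_triple is well defined. *)
Lemma swap_point_add (c : F) : swap_point (a + c) = a + swap_point c.
Proof.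
rewrite /swap_point sQ_add.
apply: (mulIf (sQ_neq0 c)); rewrite mulfVK ?sQ_neq0 // mulrDl mulfVK ?sQ_neq0 //.
by rewrite /sQ mulrDr addrAC addxx add0r.
Qed.

Lemma swap_point_neq0 (c : F) : c != 0 -> swap_point c != 0.
Proof. by move=> c0; rewrite !mulf_neq0 ?invr_eq0 ?Q_eq0. Qed.

Lemma swap_point_neqa (c : F) : c != a -> swap_point c != a.
Proof.
apply: contra_neq => /(congr1 ( *%R^~ (sQ c))); rewrite mulfVK // => /(mulfI a0).
by move/eqP; rewrite eq_sym addr_eq_l Q_eq0 addr_eq0_pchar2 eq_sym => /eqP.
Qed.

Lemma swap_point_inj : injective swap_point.
Proof.
move=> d1 d2; rewrite /swap_point -!mulrA => /(mulfI a0) /eqP.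
rewrite eqr_div ?sQ_neq0 // /sQ !mulrDr [Q d2 * Q d1]mulrC => /eqP /addrI.
rewrite -!QM => /Q_inj /eqP; rewrite !mulrDr [d2 * d1]mulrC => /eqP /addIr.
exact: mulIf.
Qed.

Lemma swap_tripleE (B : {set F}) (c : F) :
  B \in STS F -> a \in B -> c \in B -> c != a ->
  swap_triple B = [set a; swap_point c; a + swap_point c].
Proof.
move=> SB aB cB ca; rewrite /swap_triple.
case: pickP => [c' | none] /=; last by move: (none c); rewrite !inE ca cB.
rewrite !inE => /andP [c'a]; rewrite (STS_triple SB aB cB); last by rewrite eq_sym.
rewrite !inE (negbTE c'a) /= => /orP [/eqP -> // | /eqP ->].
rewrite swap_point_add (addKr_pchar2 pchar2).
by apply/setP => x; rewrite !inE; case: (x == a); rewrite //= orbC.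
Qed.

Lemma swap_triple_spec (B : {set F}) : B \in triples_through a ->
  exists2 c, [/\ B \in STS F, a \in B, c \in B, c != a & c != 0] &
    swap_triple B = [set a; swap_point c; a + swap_point c].
Proof.
move=> /[dup] XB; rewrite inE => /andP [SB aB].
have [c cB ca] := triple_second_point XB.
have c0 := STS_point_neq0 SB cB.
by exists c; [|exact: swap_tripleE].
Qed.

Lemma swap_point_triple (c : F) : c != 0 -> c != a ->
  [set a; swap_point c; a + swap_point c] \in STS F.
Proof.
by move=> c0 ca; rewrite triple_STS ?swap_point_neq0 // eq_sym swap_point_neqa.
Qed.

Lemma swap_triple_in (B : {set F}) :
  B \in triples_through a -> swap_triple B \in triples_through a.
Proof.
case/swap_triple_spec => c [_ _ _ ca c0] ->.
by rewrite inE swap_point_triple //= !inE eqxx.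
Qed.

Lemma swap_triple_z (B : {set F}) : B \in triples_through a ->
  z_gen Q P a (swap_triple B) = Q a * a / Q (z_gen P Q a B).
Proof.
case/swap_triple_spec => c [SB aB cB ca c0] ->.
have [aT bT] : a \in [set a; swap_point c; a + swap_point c] /\
    swap_point c \in [set a; swap_point c; a + swap_point c] by rewrite !inE !eqxx orbT.
rewrite (z_genE P Q SB aB cB ca) (z_genE Q P (swap_point_triple c0 ca) aT bT)
  ?swap_point_neqa //.
rewrite PK -/(sQ c) -swap_point_add /swap_point sQ_add.
rewrite !PM !QK !PV -mulrDl -mulrDr addrCA addxx addr0.
by rewrite !QM PK QV PK [a * Q a]mulrC.
Qed.

Lemma swap_triple_inj : {in triples_through a &, injective swap_triple}.
Proof.
move=> B1 B2 XB1 XB2 E.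
have [d1 [SB1 aB1 dB1 da1 _] E1] := swap_triple_spec XB1.
have [d2 [SB2 aB2 dB2 da2 _] E2] := swap_triple_spec XB2.
have : swap_point d2 \in swap_triple B1 by rewrite E E2 !inE eqxx orbT.
rewrite E1 !inE (negbTE (swap_point_neqa da2)) /=.
rewrite (STS_triple SB2 aB2 dB2) 1?eq_sym //.
case/orP => /eqP.
  by move=> /swap_point_inj <-; rewrite (STS_triple SB1 aB1 dB1) 1?eq_sym.
rewrite -swap_point_add => /swap_point_inj ->.
have d10 := STS_point_neq0 SB1 dB1.
apply: STS_triple => //; last by rewrite eq_sym addr_eq_l.
by rewrite (STS_triple SB1 aB1 dB1) 1?eq_sym // !inE eqxx !orbT.
Qed.

Lemma swap_triple_onto : swap_triple @: triples_through a = triples_through a.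
Proof.
apply/eqP; rewrite eqEcard (card_in_imset swap_triple_inj) leqnn andbT.
by apply/subsetP => B' /imsetP [B XB ->]; apply: swap_triple_in.
Qed.

Lemma zseq_swap :
  perm_eq (zseq Q P a) (map (fun z => Q a * a / Q z) (zseq P Q a)).
Proof.
exact: (zseq_reindex (f := fun z => Q a * a / Q z)
  swap_triple_inj swap_triple_onto swap_triple_z).
Qed.
End Swap.

Lemma profile_zseq_swap (a : F) : a != 0 ->
  perm_eq (profile (zseq Q P a)) (profile (zseq P Q a)).
Proof.
move=> a0; pose k z := Q a * a / Q z.
rewrite -[profile (zseq P Q a)](@profile_map_inj _ _ k).
  exact/profile_perm/zseq_swap.
have k0 : Q a * a != 0 by rewrite mulf_neq0 ?Q_eq0.
by move=> z1 z2 /(mulfI k0) /invr_inj /Q_inj.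
Qed.
End MultiplicativeBijection.

Lemma frobD (e : nat) (x y : F) : (x + y) ^+ (2 ^ e) = x ^+ (2 ^ e) + y ^+ (2 ^ e).
Proof.
elim: e => [|e IH]; first by rewrite expn0 !expr1.
by rewrite expnSr !exprM IH sqrrD mulr2n addxx addr0.
Qed.

Lemma frob0 (e : nat) : @powf F (2 ^ e) 0 = 0.
Proof. by rewrite /powf expr0n eqn0Ngt expn_gt0. Qed.

Lemma frob_inj (e : nat) : injective (@powf F (2 ^ e)).
Proof.
move=> x y Exy; apply/eqP; rewrite -addr_eq0_pchar2.
have : (x + y) ^+ (2 ^ e) == 0 by move: Exy; rewrite /powf frobD => ->; rewrite addxx.
by rewrite expf_eq0 expn_gt0.
Qed.

(* Composing a multiplicative bijection P with a Frobenius map phi does not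
   change the invariants: phi is onto, and transports those of (P, Q) at a'
   to those of (phi o P, Q o phi^-1) at phi a'. *)
Lemma invariants_frob_twist (e : nat) (P Q P2 Q2 : F -> F) :
  cancel P Q -> cancel Q P -> {morph P : x y / x * y} -> P 0 = 0 ->
  (forall x, P2 x = powf (2 ^ e) (P x)) -> (forall y, Q2 (powf (2 ^ e) y) = Q y) ->
  forall a : F, a != 0 ->
  perm_eq (profile (zseq P Q a)) (profile (zseq P2 Q2 a)) /\
  #|vset P Q a| = #|vset P2 Q2 a|.
Proof.
move=> PK QK PM P0 P2E Q2E a a0.
have phi_inj : injective (powf (2 ^ e)) := @frob_inj e.
have phiD : {morph powf (2 ^ e) : x y / x + y} := frobD e.
set a' := finv (powf (2 ^ e)) a; have Ea : powf (2 ^ e) a' = a by exact: f_finv.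
have a'0 : a' != 0 by apply: contraNneq a0 => a'0; rewrite -Ea a'0 frob0.
have [I1 I2] := invariants_indep PK QK PM P0 a0 a'0.
split; last first.
  rewrite I2 -Ea (vset_transport (h := id) phiD (@inj_id F) (fun _ _ => erefl) Q2E P2E).
  by rewrite (card_imset _ (@inj_id F)).
apply: perm_trans I1 _; rewrite -Ea -[profile (zseq P Q a')](profile_map_inj _ phi_inj).
by rewrite perm_sym; apply/profile_perm/(zseq_transport (h := id) phi_inj phiD (frob0 e)).
Qed.
End Char2.

Section PowerMaps.
Variable F : finFieldType.

Lemma powf_mod (a b : nat) : (0 < a)%N -> (0 < b)%N ->
  a = b %[mod #|F|.-1] -> @powf F a =1 powf b.
Proof.
move=> a0 b0 ab x; rewrite /powf.
have [->|x0] := eqVneq x 0; first by rewrite !expr0n eqn0Ngt a0 eqn0Ngt b0.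
have xn : x ^+ #|F|.-1 = 1.
  apply: (mulfI x0); rewrite -exprS prednK; last exact: ltnW (finNzRing_gt1 F).
  by rewrite expf_card mulr1.
by rewrite -(expr_mod a xn) ab expr_mod.
Qed.

(* For t coprime to |F| - 1, x^t is injective: its inverse is x^k with
   t k = 1 modulo |F| - 1. *)
Lemma powf_inj (t : nat) : (0 < t)%N -> coprime t #|F|.-1 -> injective (@powf F t).
Proof.
move=> t0 ct; case: (egcdnP #|F|.-1 t0) => k l; rewrite (eqP ct) => Bezout _.
have k0 : (0 < k)%N by move: Bezout; case: (k) => // /esym; rewrite mul0n addn1.
apply: (can_inj (g := @powf F k)) => x; rewrite /powf -exprM.
have tk0 : (0 < t * k)%N by rewrite muln_gt0 t0 k0.
have tk1 : (t * k = 1 %[mod #|F|.-1])%N by rewrite mulnC Bezout modnMDl.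
exact: powf_mod tk0 (ltn0Sn 0) tk1 x.
Qed.

Lemma powf_props (t : nat) : (0 < t)%N -> coprime t #|F|.-1 ->
  [/\ cancel (@powf F t) (pinv t), cancel (@pinv F t) (powf t),
      {morph @powf F t : x y / x * y}, @powf F t 0 = 0 & @powf F t 1 = 1].
Proof.
move=> t0 ct; have ti := powf_inj t0 ct; split.
- exact: finv_f ti.
- exact: f_finv ti.
- by move=> x y; rewrite /powf exprMn.
- by rewrite /powf expr0n eqn0Ngt t0.
- by rewrite /powf expr1n.
Qed.
End PowerMaps.

Local Open Scope nat_scope.

Lemma pow2_mod_period (m k : nat) : 0 < m -> 2 ^ (m * k) = 1 %[mod 2 ^ m - 1].
Proof.
move=> m0; rewrite expnM -modnXm.
set n := 2 ^ m - 1; have -> : 2 ^ m = n + 1 by rewrite subnK // expn_gt0.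
by rewrite modnDl modnXm exp1n.
Qed.

Lemma coset_shift (m b k1 k2 t1 t2 : nat) : 0 < m ->
  t1 = b * 2 ^ k1 %[mod 2 ^ m - 1] -> t2 = b * 2 ^ k2 %[mod 2 ^ m - 1] ->
  t2 = t1 * 2 ^ (k2 + k1 * (m - 1)) %[mod 2 ^ m - 1].
Proof.
move=> m0 E1 E2; rewrite -modnMml E1 modnMml E2 -mulnA -expnD.
have -> : k1 + (k2 + k1 * (m - 1)) = k2 + m * k1.
  by move: m0; case: (m) => // m' _; rewrite subn1 /= mulSn; lia.
by rewrite expnD mulnA -[in RHS]modnMmr pow2_mod_period // modnMmr muln1.
Qed.

Lemma coset_inverse_product (m i j k1 k2 t1 t2 : nat) :
  t1 = i * 2 ^ k1 %[mod 2 ^ m - 1] -> t2 = j * 2 ^ k2 %[mod 2 ^ m - 1] ->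
  i * j = 1 %[mod 2 ^ m - 1] -> t1 * t2 = 2 ^ (k1 + k2) %[mod 2 ^ m - 1].
Proof.
move=> E1 E2 Eij; rewrite -modnMm E1 E2 modnMm.
have -> : i * 2 ^ k1 * (j * 2 ^ k2) = (i * j) * 2 ^ (k1 + k2) by rewrite expnD; lia.
by rewrite -modnMml Eij modnMml mul1n.
Qed.

Lemma modn_inverse_uniq (n i j1 j2 : nat) :
  i * j1 = 1 %[mod n] -> i * j2 = 1 %[mod n] -> j1 = j2 %[mod n].
Proof.
move=> E1 E2; rewrite -[X in X %% _ = _]muln1 -modnMmr -E2 modnMmr mulnCA mulnA.
by rewrite -modnMml E1 modnMml mul1n.
Qed.

Lemma coset_star_cases (m i t1 t2 : nat) : 0 < m ->
  in_coset_star (2 ^ m - 1) i t1 -> in_coset_star (2 ^ m - 1) i t2 ->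
  (exists e, t2 = t1 * 2 ^ e %[mod 2 ^ m - 1]) \/
  (exists e, t1 * t2 = 2 ^ e %[mod 2 ^ m - 1]).
Proof.
move=> m0 [[k1 E1] | [j1 [Ej1 [k1 E1]]]] [[k2 E2] | [j2 [Ej2 [k2 E2]]]].
- by left; eexists; exact: coset_shift m0 E1 E2.
- by right; eexists; exact: coset_inverse_product E1 E2 Ej2.
- by right; eexists; rewrite mulnC; exact: coset_inverse_product E2 E1 Ej1.
- left; eexists; apply: coset_shift m0 E1 (etrans E2 _).
  by rewrite -modnMml (modn_inverse_uniq Ej2 Ej1) modnMml.
Qed.

Local Open Scope ring_scope.

Definition equivalent_monomials (F : finFieldType) (t1 t2 : nat) : Prop :=
  selfemb_iso F t1 t2 /\
  forall a : F, a != 0 -> perm_eq (Vstar t1 a) (Vstar t2 a) /\ vF t1 a = vF t2 a.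

Lemma monomial_invariants_indep (F : finFieldType) (t : nat) (a b : F) :
  2 \in [pchar F] -> (0 < t)%N -> coprime t #|F|.-1 -> a != 0 -> b != 0 ->
  perm_eq (Vstar t a) (Vstar t b) /\ vF t a = vF t b.
Proof.
move=> pchar2 t0 ct a0 b0; have [PK QK PM P0 _] := powf_props t0 ct.
exact (invariants_indep pchar2 PK QK PM P0 a0 b0).
Qed.

Section TwoCases.
Variable F : finFieldType.
Hypothesis pchar2 : 2 \in [pchar F].
Variables t1 t2 e : nat.
Hypotheses (t1_gt0 : (0 < t1)%N) (t1_coprime : coprime t1 #|F|.-1).
Hypotheses (t2_gt0 : (0 < t2)%N) (t2_coprime : coprime t2 #|F|.-1).

Let phi := @powf F (2 ^ e).
Let phi_inj : injective phi := frob_inj pchar2 (e := e).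
Let phiD : {morph phi : x y / x + y} := frobD pchar2 e.
Let phi0 : phi 0 = 0 := frob0 F e.

(* Case t2 = t1 2^e: x^t2 = phi o x^t1, and phi is the isomorphism. *)
Lemma shift_case :
  (forall x : F, powf t2 x = phi (powf t1 x)) -> equivalent_monomials F t1 t2.
Proof.
move=> P2E; have [PK1 QK1 PM1 P01 _] := powf_props t1_gt0 t1_coprime.
have [PK2 _ _ _ _] := powf_props t2_gt0 t2_coprime.
have Q2E y : pinv t2 (phi y) = pinv t1 y by rewrite -{1}(QK1 y) -P2E PK2.
split.
  exists (perm phi_inj); split; first by rewrite permE phi0.
  left; rewrite !(img_sys_ext _ (permE phi_inj)) (img_sys_STS phi_inj phiD phi0).
  by split; rewrite // img_sys_comp; apply: img_sys_ext => x; rewrite /= P2E.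
by move=> a a0; exact (invariants_frob_twist pchar2 PK1 QK1 PM1 P01 P2E Q2E a0).
Qed.

(* Case t1 t2 = 2^e: x^t2 = phi o (x^t1)^-1, and x^t2 is the isomorphism,
   exchanging the two systems. *)
Lemma inverse_case :
  (forall x : F, powf t2 (powf t1 x) = phi x) -> equivalent_monomials F t1 t2.
Proof.
move=> P21E; have [PK1 QK1 PM1 P01 P11] := powf_props t1_gt0 t1_coprime.
have [PK2 _ _ P02 _] := powf_props t2_gt0 t2_coprime.
have P2E y : powf t2 y = phi (pinv t1 y) by rewrite -{1}(QK1 y) P21E.
have Q2E y : pinv t2 (phi y) = powf t1 y by rewrite -P21E PK2.
have t2_inj := powf_inj t2_gt0 t2_coprime.
split.
  exists (perm t2_inj); split; first by rewrite permE P02.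
  right; rewrite !(img_sys_ext _ (permE t2_inj)); split => //.
  rewrite img_sys_comp (img_sys_ext _ P21E); exact: img_sys_STS phi_inj phiD phi0.
move=> a a0.
have [Vtwist vtwist] := invariants_frob_twist pchar2 QK1 PK1 (QM PK1 QK1 PM1)
  (Q0 PK1 QK1 P01) P2E Q2E a0.
have Vswap := profile_zseq_swap pchar2 PK1 QK1 PM1 P01 P11 a0.
have vswap := card_vset_swap pchar2 PK1 QK1 PM1 P01 P11 a0.
rewrite perm_sym in Vswap.
split; first exact (perm_trans Vswap Vtwist).
exact (etrans (esym vswap) vtwist).
Qed.
End TwoCases.

Theorem mainTheorem7 (F : finFieldType) (m : nat) (t1 t2 i : nat) :
  #|F| = (2 ^ m)%N ->
  monomial_perm m t1 -> monomial_perm m t2 ->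
  in_coset_star (2 ^ m - 1) i t1 -> in_coset_star (2 ^ m - 1) i t2 ->
  selfemb_iso F t1 t2 /\
  (forall a : F, a != 0 ->
     perm_eq (Vstar t1 a) (Vstar t2 a) /\ vF t1 a = vF t2 a) /\
  (forall a b : F, a != 0 -> b != 0 ->
     perm_eq (Vstar t1 a) (Vstar t1 b) /\ vF t1 a = vF t1 b /\
     perm_eq (Vstar t2 a) (Vstar t2 b) /\ vF t2 a = vF t2 b).
Proof.
move=> cardF [t1_gt0 ct1] [t2_gt0 ct2] t1_in t2_in.
have pchar2 : 2 \in [pchar F] by apply: (card_finPcharP cardF).
have m_gt0 : (0 < m)%N.
  by rewrite lt0n; apply: contraTneq (finNzRing_gt1 F) => m0; rewrite cardF m0.
have n_def : (2 ^ m - 1)%N = #|F|.-1 by rewrite cardF subn1.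
rewrite n_def in ct1 ct2.
have [iso same] : equivalent_monomials F t1 t2.
  case: (coset_star_cases m_gt0 t1_in t2_in); rewrite n_def => -[e Ee].
    apply: (shift_case pchar2 (e := e) t1_gt0 ct1 t2_gt0 ct2) => x.
    have t1e_gt0 : (0 < t1 * 2 ^ e)%N by rewrite muln_gt0 t1_gt0 expn_gt0.
    by rewrite (powf_mod t2_gt0 t1e_gt0 Ee) /powf exprM.
  apply: (inverse_case pchar2 (e := e) t1_gt0 ct1 t2_gt0 ct2) => x.
  have t12_gt0 : (0 < t1 * t2)%N by rewrite muln_gt0 t1_gt0 t2_gt0.
  by rewrite /powf -exprM; exact (powf_mod t12_gt0 (expn_gt0 2 e) Ee x).
do 2 split => //; move=> a b a0 b0.
have [V1 v1] := monomial_invariants_indep pchar2 t1_gt0 ct1 a0 b0.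
by have [V2 v2] := monomial_invariants_indep pchar2 t2_gt0 ct2 a0 b0.
Qed.
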